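(* Let $M$ be a monoidal category and $C,D$ be $M$-actegories. Let $f:x\to y$ be a morphism of $C$ and $g:v\to u$ a morphism of $D$. Then under the bijection between 2-cells $R_x\otimes L_u\Rightarrow R_y\otimes L_v$ in $\mathit{Tamb}_{C,D}$ and optics $(x,u)\to(y,v)$ (a 2-cell $\theta$ corresponding to the image under its $(x,u)$-component of the identity optic $\mathrm{id}_{(x,u)}\in(R_x\otimes L_u)(x,u)$), the horizontal composite 2-cell $R_f\otimes L_g:R_x\otimes L_u\Rightarrow R_y\otimes L_v$ corresponds to the optic $\langle f;\lambda^{-1}_y\mid\lambda_v;g\rangle_I$.
   Context: $(M,\otimes,I,\lambda,a)$ is a monoidal category; an $M$-actegory is a category $C$ with a functor $\odot:M\times C\to C$ and coherent natural isomorphisms $\lambda_x:I\odot x\to x$, $a_{m,n,x}:(m\otimes n)\odot x\to m\odot(n\odot x)$; $M$ is an $M$-actegory via $\otimes$. Composition is diagrammatic ($f;g$ = $f$ then $g$). $\mathit{Optic}_{C,D}((x,u),(y,v))=\int^{m\in M}C(x,m\odot y)\times D(m\odot v,u)$, elements written $\langle\alpha\mid\beta\rangle_m$ ($\alpha:x\to m\odot y$, $\beta:m\odot v\to u$), modulo $\langle\alpha;(h\odot y)\mid\beta\rangle_m=\langle\alpha\mid(h\odot v);\beta\rangle_n$ for $h:n\to m$; identity optic $\langle\lambda^{-1}_x\mid\lambda_u\rangle_I$. $\mathit{Tamb}_{C,D}$: functors $P:C^{op}\times D\to\mathrm{Set}$ with compatible strength maps $P(c,d)\to P(m\odot c,m\odot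 d)$; 2-cells are strength-preserving natural transformations; composition $(P\otimes Q)(c,d)=\int^{e}P(c,e)\times Q(e,d)$, and horizontal composition of 2-cells is induced componentwise. $R_x\in\mathit{Tamb}_{C,M}$: $(c,n)\mapsto C(c,n\odot x)$; $L_u\in\mathit{Tamb}_{M,D}$: $(n,d)\mapsto D(n\odot u,d)$ (with strengths induced by the action and associator). For $f:x\to y$ in $C$, $R_f:R_x\Rightarrow R_y$ postcomposes with $n\odot f$; for $g:v\to u$ in $D$, $L_g:L_u\Rightarrow L_v$ precomposes with $n\odot g$. So $(R_x\otimes L_u)(x,u)=\mathit{Optic}_{C,D}((x,u),(x,u))$. *)

From Stdlib Require Import Relations.Relation_Operators.

Set Implicit Arguments.
Unset Strict Implicit.

(* ---------- Categories (composition is diagrammatic) ---------- *)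
Record Category := {
  ob : Type;
  hom : ob -> ob -> Type;
  idm : forall a, hom a a;
  cmp : forall a b c, hom a b -> hom b c -> hom a c;
  cmp_id_l : forall a b (f : hom a b), cmp (idm a) f = f;
  cmp_id_r : forall a b (f : hom a b), cmp f (idm b) = f;
  cmp_assoc : forall a b c d (f : hom a b) (g : hom b c) (h : hom c d),
      cmp (cmp f g) h = cmp f (cmp g h)
}.
Arguments hom {c0} _ _.
Arguments idm {c0} _.
Arguments cmp {c0 a b c} _ _.
Notation "f ;; g" := (cmp f g) (at level 40, left associativity).

Record MonCat := {
  mcat : Category;
  tens : ob mcat -> ob mcat -> ob mcat;
  tensm : forall a a' b b', hom a a' -> hom b b' -> hom (tens a b) (tens a' b');
  tensm_id : forall a b, tensm (idm a) (idm b) = idm (tens a b);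
  tensm_cmp : forall a a' a'' b b' b'' (f : hom a a') (f' : hom a' a'')
      (g : hom b b') (g' : hom b' b''),
      tensm (f ;; f') (g ;; g') = tensm f g ;; tensm f' g';
  munit : ob mcat;
  lam : forall a, hom (tens munit a) a;
  lam_inv : forall a, hom a (tens munit a);
  lam_iso1 : forall a, lam a ;; lam_inv a = idm _;
  lam_iso2 : forall a, lam_inv a ;; lam a = idm _;
  lam_nat : forall a b (f : hom a b), tensm (idm munit) f ;; lam b = lam a ;; f;
  rho : forall a, hom (tens a munit) a;
  rho_inv : forall a, hom a (tens a munit);
  rho_iso1 : forall a, rho a ;; rho_inv a = idm _;
  rho_iso2 : forall a, rho_inv a ;; rho a = idm _;
  rho_nat : forall a b (f : hom a b), tensm f (idm munit) ;; rho b = rho a ;; f;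
  asc : forall a b c, hom (tens (tens a b) c) (tens a (tens b c));
  asc_inv : forall a b c, hom (tens a (tens b c)) (tens (tens a b) c);
  asc_iso1 : forall a b c, asc a b c ;; asc_inv a b c = idm _;
  asc_iso2 : forall a b c, asc_inv a b c ;; asc a b c = idm _;
  asc_nat : forall a a' b b' c c' (f : hom a a') (g : hom b b') (h : hom c c'),
      tensm (tensm f g) h ;; asc a' b' c' = asc a b c ;; tensm f (tensm g h);
  pentagon : forall a b c d,
      asc (tens a b) c d ;; asc a b (tens c d)
      = tensm (asc a b c) (idm d) ;; asc a (tens b c) d ;; tensm (idm a) (asc b c d);
  triangle : forall a b,
      asc a munit b ;; tensm (idm a) (lam b) = tensm (rho a) (idm b)
}.
Arguments tensm {m a a' b b'} _ _.
Arguments lam {m} a.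
Arguments lam_inv {m} a.
Arguments rho {m} a.
Arguments asc {m} a b c.

Record Actegory (M : MonCat) := {
  acat : Category;
  act : ob (mcat M) -> ob acat -> ob acat;
  actm : forall m m' c c', hom m m' -> hom c c' -> hom (act m c) (act m' c');
  actm_id : forall m c, actm (idm m) (idm c) = idm (act m c);
  actm_cmp : forall m m' m'' c c' c'' (h : hom m m') (h' : hom m' m'')
      (f : hom c c') (f' : hom c' c''),
      actm (h ;; h') (f ;; f') = actm h f ;; actm h' f';
  alam : forall c, hom (act (munit M) c) c;
  alam_inv : forall c, hom c (act (munit M) c);
  alam_iso1 : forall c, alam c ;; alam_inv c = idm _;
  alam_iso2 : forall c, alam_inv c ;; alam c = idm _;
  alam_nat : forall c c' (f : hom c c'),
      actm (idm (munit M)) f ;; alam c' = alam c ;; f;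
  aasc : forall m n c, hom (act (tens m n) c) (act m (act n c));
  aasc_inv : forall m n c, hom (act m (act n c)) (act (tens m n) c);
  aasc_iso1 : forall m n c, aasc m n c ;; aasc_inv m n c = idm _;
  aasc_iso2 : forall m n c, aasc_inv m n c ;; aasc m n c = idm _;
  aasc_nat : forall m m' n n' c c' (h : hom m m') (k : hom n n') (f : hom c c'),
      actm (tensm h k) f ;; aasc m' n' c' = aasc m n c ;; actm h (actm k f);
  apentagon : forall m n p c,
      aasc (tens m n) p c ;; aasc m n (act p c)
      = actm (asc m n p) (idm c) ;; aasc m (tens n p) c ;; actm (idm m) (aasc n p c);
  aunit_l : forall n c, aasc (munit M) n c ;; alam (act n c) = actm (lam n) (idm c);
  aunit_r : forall m c,
      aasc m (munit M) c ;; actm (idm m) (alam c) = actm (rho m) (idm c)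
}.
Arguments act {M a} m c.
Arguments actm {M a m m' c c'} _ _.
Arguments alam {M a} c.
Arguments alam_inv {M a} c.

Record Prof (A B : Category) := {
  pob : ob A -> ob B -> Type;
  plmap : forall a a' b, hom a' a -> pob a b -> pob a' b;
  prmap : forall a b b', hom b b' -> pob a b -> pob a b';
  plmap_id : forall a b (p : pob a b), plmap (idm a) p = p;
  plmap_cmp : forall a a' a'' b (h : hom a'' a') (k : hom a' a) (p : pob a b),
      plmap (h ;; k) p = plmap h (plmap k p);
  prmap_id : forall a b (p : pob a b), prmap (idm b) p = p;
  prmap_cmp : forall a b b' b'' (h : hom b b') (k : hom b' b'') (p : pob a b),
      prmap (h ;; k) p = prmap k (prmap h p);
  plr : forall a a' b b' (h : hom a' a) (k : hom b b') (p : pob a b),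
      plmap h (prmap k p) = prmap k (plmap h p)
}.
Arguments pob {A B} p0 _ _.
Arguments plmap {A B} p0 {a a' b} _ _.
Arguments prmap {A B} p0 {a b b'} _ _.

(* Composite (P ⊗ Q)(a,c) = ∫^b P(a,b) × Q(b,c): representatives ... *)
Definition ptensor {A B E : Category} (P : Prof A B) (Q : Prof B E)
  (a : ob A) (c : ob E) : Type :=
  { b : ob B & (pob P a b * pob Q b c)%type }.

(* ... and the generating relation of the coend:
   (P(a,h) p, q)_m  ~  (p, Q(h,c) q)_n   for h : n -> m. *)
Inductive coend_step {A B E : Category} (P : Prof A B) (Q : Prof B E)
  (a : ob A) (c : ob E) : ptensor P Q a c -> ptensor P Q a c -> Prop :=
| cstep : forall (n m : ob B) (h : hom n m) (p : pob P a n) (q : pob Q m c),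
    coend_step (existT _ m (prmap P h p, q)) (existT _ n (p, plmap Q h q)).

(* Equality of elements of the coend = equivalence closure of the relation. *)
Definition coend_eq {A B E : Category} (P : Prof A B) (Q : Prof B E)
  (a : ob A) (c : ob E) : ptensor P Q a c -> ptensor P Q a c -> Prop :=
  clos_refl_sym_trans _ (@coend_step A B E P Q a c).
Arguments coend_eq {A B E} P Q a c _ _.

Record Transf {A B : Category} (P P' : Prof A B) := {
  tc : forall a b, pob P a b -> pob P' a b;
  tc_natl : forall a a' b (h : hom a' a) (p : pob P a b),
      tc (plmap P h p) = plmap P' h (tc p);
  tc_natr : forall a b b' (k : hom b b') (p : pob P a b),
      tc (prmap P k p) = prmap P' k (tc p)
}.
Arguments tc {A B P P'} t {a b} _.

Definition hcomp {A B E : Category} {P P' : Prof A B} {Q Q' : Prof B E}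
  (th : Transf P P') (ph : Transf Q Q') (a : ob A) (c : ob E)
  (t : ptensor P Q a c) : ptensor P' Q' a c :=
  existT _ (projT1 t) (tc th (fst (projT2 t)), tc ph (snd (projT2 t))).

Section Helpers.
Variable M : MonCat.
Variable C : Actegory M.

Lemma actm_cmp_l (m m' m'' : ob (mcat M)) (c : ob (acat C))
  (h : hom m m') (k : hom m' m'') :
  actm (h ;; k) (idm c) = actm h (idm c) ;; actm k (idm c).
Proof. rewrite <- actm_cmp, cmp_id_l. reflexivity. Qed.

Lemma actm_split1 (m m' : ob (mcat M)) (c c' : ob (acat C))
  (k : hom m m') (f : hom c c') :
  actm k (idm c) ;; actm (idm m') f = actm k f.
Proof. rewrite <- actm_cmp, cmp_id_l, cmp_id_r. reflexivity. Qed.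

Lemma actm_split2 (m m' : ob (mcat M)) (c c' : ob (acat C))
  (k : hom m m') (f : hom c c') :
  actm (idm m) f ;; actm k (idm c') = actm k f.
Proof. rewrite <- actm_cmp, cmp_id_l, cmp_id_r. reflexivity. Qed.
End Helpers.

Definition R {M : MonCat} {C : Actegory M} (x : ob (acat C)) :
  Prof (acat C) (mcat M).
Proof.
refine {| pob := fun c n => hom c (act n x);
          plmap := fun c c' n (h : hom c' c) (al : hom c (act n x)) => h ;; al;
          prmap := fun c n n' (k : hom n n') (al : hom c (act n x)) =>
                     al ;; actm k (idm x) |}.
- intros; apply cmp_id_l.
- intros; apply cmp_assoc.
- intros; rewrite actm_id; apply cmp_id_r.
- intros; rewrite actm_cmp_l, cmp_assoc; reflexivity.
- intros; symmetry; apply cmp_assoc.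
Defined.

Definition L {M : MonCat} {D : Actegory M} (u : ob (acat D)) :
  Prof (mcat M) (acat D).
Proof.
refine {| pob := fun n d => hom (act n u) d;
          plmap := fun n n' d (k : hom n' n) (be : hom (act n u) d) =>
                     actm k (idm u) ;; be;
          prmap := fun n d d' (h : hom d d') (be : hom (act n u) d) => be ;; h |}.
- intros; rewrite actm_id; apply cmp_id_l.
- intros; rewrite actm_cmp_l, cmp_assoc; reflexivity.
- intros; apply cmp_id_r.
- intros; symmetry; apply cmp_assoc.
- intros; symmetry; apply cmp_assoc.
Defined.

Definition R_map {M : MonCat} {C : Actegory M} {x y : ob (acat C)}
  (f : hom x y) : Transf (R x) (R y).
Proof.
refine {| tc := fun c n (al : pob (R x) c n) => ((al : hom c (act n x)) ;; actm (idm n) f : pob (R y) c n) |}.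
- intros; simpl; apply cmp_assoc.
- intros; simpl. rewrite !cmp_assoc, actm_split1, actm_split2. reflexivity.
Defined.

Definition L_map {M : MonCat} {D : Actegory M} {v u : ob (acat D)}
  (g : hom v u) : Transf (L u) (L v).
Proof.
refine {| tc := fun n d (be : pob (L u) n d) => (actm (idm n) g ;; (be : hom (act n u) d) : pob (L v) n d) |}.
- intros; simpl. rewrite <- !cmp_assoc, actm_split1, actm_split2. reflexivity.
- intros; simpl; symmetry; apply cmp_assoc.
Defined.

Definition Optic {M : MonCat} {C D : Actegory M}
  (x : ob (acat C)) (u : ob (acat D)) (y : ob (acat C)) (v : ob (acat D)) :=
  ptensor (R y) (L v) x u.

Definition optic_mk {M : MonCat} {C D : Actegory M}
  {x y : ob (acat C)} {u v : ob (acat D)} (m : ob (mcat M))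
  (al : hom x (act m y)) (be : hom (act m v) u) : Optic x u y v :=
  existT _ m (al, be).
Arguments optic_mk {M C D x y u v} m al be.

Definition id_optic {M : MonCat} {C D : Actegory M}
  (x : ob (acat C)) (u : ob (acat D)) : Optic x u x u :=
  optic_mk (munit M) (alam_inv x) (alam u).

Definition optic_of_2cell {M : MonCat} {C D : Actegory M}
  {x y : ob (acat C)} {u v : ob (acat D)}
  (th : forall a c, ptensor (R x) (L u) a c -> ptensor (R y) (L v) a c)
  : Optic x u y v :=
  th x u (id_optic x u).

(* The horizontal composite acts on representatives componentwise, so it sends
   the identity optic <λ⁻¹_x | λ_u>_I to <λ⁻¹_x ; (I ⊙ f) | (I ⊙ g) ; λ_u>_I,
   which by naturality of λ and λ⁻¹ is already the representative
   <f ; λ⁻¹_y | λ_v ; g>_I, before any quotienting. *)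
From Stdlib Require Import Relations.Relation_Operators.

Lemma cmp_inv_square (A : Category) (a a' b b' : ob A)
  (p : hom a b) (p_inv : hom b a) (q : hom a' b') (q_inv : hom b' a')
  (h : hom a a') (k : hom b b') :
  p_inv ;; p = idm b -> q ;; q_inv = idm a' ->
  h ;; q = p ;; k -> p_inv ;; h = k ;; q_inv.
Proof.
  intros p_invK qK square.
  rewrite <- (cmp_id_r (p_inv ;; h)), <- qK.
  rewrite cmp_assoc, <- (cmp_assoc h), square.
  rewrite <- cmp_assoc, <- cmp_assoc, p_invK, cmp_id_l.
  reflexivity.
Qed.

Lemma alam_inv_nat (M : MonCat) (C : Actegory M) (x y : ob (acat C))
  (f : hom x y) :
  alam_inv x ;; actm (idm (munit M)) f = f ;; alam_inv y.
Proof.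
  eapply cmp_inv_square.
  - apply alam_iso2.
  - apply alam_iso1.
  - apply alam_nat.
Qed.

Lemma hcomp_R_map_L_map_id_optic (M : MonCat) (C D : Actegory M)
  (x y : ob (acat C)) (f : hom x y) (v u : ob (acat D)) (g : hom v u) :
  hcomp (R_map f) (L_map g) (id_optic x u)
  = optic_mk (munit M) (f ;; alam_inv y) (alam v ;; g).
Proof.
  unfold hcomp, id_optic, optic_mk; simpl.
  rewrite alam_inv_nat, alam_nat.
  reflexivity.
Qed.

Theorem mainTheorem5 (M : MonCat) (C D : Actegory M)
  (x y : ob (acat C)) (f : hom x y) (v u : ob (acat D)) (g : hom v u) :
  coend_eq (R y) (L v) x u
    (optic_of_2cell (hcomp (R_map f) (L_map g)))
    (optic_mk (munit M) (f ;; alam_inv y) (alam v ;; g)).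
Proof.
  unfold optic_of_2cell.
  rewrite hcomp_R_map_L_map_id_optic.
  apply rst_refl.
Qed.
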